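(* Let $(S,\sqcup,\cap)$ be an ado-semilattice and define $a\curlyvee b=(a\sqcup b)\cap(b\sqcup a)$. Then for all $a,b,c,d\in S$: (1) $a\sqcup b=a\curlyvee(a\curlyvee b)$; (2) $\curlyvee$ is commutative and idempotent; (3) $(a\curlyvee b)\sqcup(a\sqcup b)=a\sqcup b$; (4) $a\sqcup(b\curlyvee c)=(a\sqcup b)\curlyvee(a\sqcup c)$; (5) if $d\lesssim a$, $d\lesssim b$, $d\lesssim c$, $d\lesssim a\curlyvee b$ and $d\lesssim b\curlyvee c$, then $d\lesssim a\curlyvee c$.
   Context: An o-semilattice is an algebra $(L,\cap,\sqcup)$ such that $(L,\cap)$ is a semilattice and, with $x\leq y$ iff $x=x\cap y$, for all $x,y,z$: (i) $x\leq x\sqcup y$; (ii) $(x\cap y)\sqcup(y\cap z)\leq y$; (iii) $x\sqcup y\leq x\sqcup(y\cap(x\sqcup y))$; (iv) $x\cap z\leq(x\cap y)\sqcup z$. It is distributive if $(a\cap d)\sqcup((b\cap d)\cap(c\cap d))=((a\cap d)\sqcup(b\cap d))\cap((a\cap d)\sqcup(c\cap d))$ for all $a,b,c,d$. An ado-semilattice is a distributive o-semilattice in which $\sqcup$ is associative. Here $x\lesssim y$ means $y\sqcup x=y$. *)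

Definition ole {L : Type} (cap : L -> L -> L) (x y : L) : Prop := x = cap x y.

Record o_semilattice (L : Type) (cap sqcup : L -> L -> L) : Prop := {
  os_cap_assoc : forall x y z, cap x (cap y z) = cap (cap x y) z;
  os_cap_comm  : forall x y, cap x y = cap y x;
  os_cap_idem  : forall x, cap x x = x;
  os_i   : forall x y, ole cap x (sqcup x y);
  os_ii  : forall x y z, ole cap (sqcup (cap x y) (cap y z)) y;
  os_iii : forall x y, ole cap (sqcup x y) (sqcup x (cap y (sqcup x y)));
  os_iv  : forall x y z, ole cap (cap x z) (sqcup (cap x y) z)
}.

Definition distributive_os (L : Type) (cap sqcup : L -> L -> L) : Prop :=
  forall a b c d,
    sqcup (cap a d) (cap (cap b d) (cap c d)) =
    cap (sqcup (cap a d) (cap b d)) (sqcup (cap a d) (cap c d)).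

Record ado_semilattice (L : Type) (cap sqcup : L -> L -> L) : Prop := {
  ado_os : o_semilattice L cap sqcup;
  ado_distr : distributive_os L cap sqcup;
  ado_assoc : forall x y z, sqcup x (sqcup y z) = sqcup (sqcup x y) z
}.

Definition qle {L : Type} (sqcup : L -> L -> L) (x y : L) : Prop := sqcup y x = y.

Definition cvee {L : Type} (cap sqcup : L -> L -> L) (a b : L) : L :=
  cap (sqcup a b) (sqcup b a).

From Stdlib Require Import Setoid.

(* Below any fixed element, ⊔ is commutative and ⊔ and ∩ distribute over each
   other.  This yields the modular law  a ≤ m ≤ a ⊔ t -> m = a ⊔ (m ∩ t),
   which removes the bound from left distributivity:
   a ⊔ (b ∩ c) = (a ⊔ b) ∩ (a ⊔ c)  for all a, b, c; together with
   associativity (making ⊔ left self-distributive) this gives (1) and (4).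
   For (5): d ≲ p and d ≲ q imply d ≲ p ∩ q whenever p and q have a common
   upper bound.  As a ⋎ b lies below both a ⊔ b and b ⊔ a, this turns
   d ≲ a, d ≲ b, d ≲ a ⋎ b into d ≲ a ∩ b, and (5) follows from
   (a ∩ b) ∩ (b ∩ c) ≤ a ⋎ c. *)

Record semilattice {S : Type} (cap : S -> S -> S) : Prop := {
  sl_assoc : forall x y z, cap x (cap y z) = cap (cap x y) z;
  sl_comm : forall x y, cap x y = cap y x;
  sl_idem : forall x, cap x x = x
}.

Lemma o_semilattice_semilattice {S : Type} (cap sqcup : S -> S -> S) :
  o_semilattice S cap sqcup -> semilattice cap.
Proof. intros HO; split; apply HO. Qed.

Section Semilattice.
Context {S : Type} {cap : S -> S -> S}.
Hypothesis HL : semilattice cap.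

Local Infix "∩" := cap (at level 40, left associativity).
Local Notation "x ≤ y" := (ole cap x y) (at level 70).

Lemma ole_refl x : x ≤ x.
Proof. unfold ole; now rewrite (sl_idem _ HL). Qed.

Lemma ole_trans x y z : x ≤ y -> y ≤ z -> x ≤ z.
Proof.
  unfold ole; intros Hxy Hyz.
  rewrite Hxy at 1; rewrite Hyz, (sl_assoc _ HL), <- Hxy; reflexivity.
Qed.

Lemma ole_antisym x y : x ≤ y -> y ≤ x -> x = y.
Proof. unfold ole; intros Hxy Hyx; rewrite Hxy at 1; rewrite Hyx at 2; apply (sl_comm _ HL). Qed.

Lemma cap_olel x y : x ∩ y ≤ x.
Proof. unfold ole; now rewrite (sl_comm _ HL _ x), (sl_assoc _ HL), (sl_idem _ HL). Qed.

Lemma cap_oler x y : x ∩ y ≤ y.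
Proof. unfold ole; now rewrite <- (sl_assoc _ HL), (sl_idem _ HL). Qed.

Lemma ole_cap x y z : z ≤ x -> z ≤ y -> z ≤ x ∩ y.
Proof. unfold ole; intros Hx Hy; now rewrite (sl_assoc _ HL), <- Hx. Qed.

Lemma cap_ole2 x y z t : x ≤ z -> y ≤ t -> x ∩ y ≤ z ∩ t.
Proof.
  intros Hxz Hyt; apply ole_cap.
  - exact (ole_trans _ _ _ (cap_olel x y) Hxz).
  - exact (ole_trans _ _ _ (cap_oler x y) Hyt).
Qed.

Lemma cap_eql x y : x ≤ y -> x ∩ y = x.
Proof. now unfold ole; intros H; rewrite <- H. Qed.

Lemma cap_eqr x y : x ≤ y -> y ∩ x = x.
Proof. now unfold ole; intros H; rewrite (sl_comm _ HL), <- H. Qed.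

End Semilattice.

Section OSemilattice.
Context {S : Type} {cap sqcup : S -> S -> S}.
Hypothesis HO : o_semilattice S cap sqcup.
Let HL := o_semilattice_semilattice cap sqcup HO.

Local Infix "∩" := cap (at level 40, left associativity).
Local Infix "⊔" := sqcup (at level 50, left associativity).
Local Notation "x ≤ y" := (ole cap x y) (at level 70).

Lemma ole_joinl x y : x ≤ x ⊔ y.
Proof. apply (os_i _ _ _ HO). Qed.

Lemma join_lub x y z : x ≤ z -> y ≤ z -> x ⊔ y ≤ z.
Proof.
  intros Hx Hy; pose proof (os_ii _ _ _ HO x z y) as H.
  now rewrite (cap_eql _ _ Hx), (cap_eqr HL _ _ Hy) in H.
Qed.

Lemma join_idem x : x ⊔ x = x.
Proof. apply (ole_antisym HL); [apply join_lub; apply (ole_refl HL) | apply ole_joinl]. Qed.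

Lemma join_absorbl x y : y ≤ x -> x ⊔ y = x.
Proof.
  intros Hyx; apply (ole_antisym HL); [apply join_lub, Hyx; apply (ole_refl HL) | apply ole_joinl].
Qed.

Lemma cap_ole_join a x z : a ≤ x -> x ∩ z ≤ a ⊔ z.
Proof.
  intros Hax; pose proof (os_iv _ _ _ HO x a z) as H.
  now rewrite (cap_eqr HL _ _ Hax) in H.
Qed.

Lemma join_absorbr x y : x ≤ y -> x ⊔ y = y.
Proof.
  intros Hxy; apply (ole_antisym HL).
  - apply join_lub; [exact Hxy | apply (ole_refl HL)].
  - rewrite <- (sl_idem _ HL y) at 1; apply cap_ole_join, Hxy.
Qed.

Lemma ole_joinr_below w y z : y ≤ w -> z ≤ w -> z ≤ y ⊔ z.
Proof.
  intros Hy Hz; pose proof (cap_ole_join y w z Hy) as H.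
  now rewrite (cap_eqr HL _ _ Hz) in H.
Qed.

Lemma join_comm_below w y z : y ≤ w -> z ≤ w -> y ⊔ z = z ⊔ y.
Proof.
  intros Hy Hz; apply (ole_antisym HL); apply join_lub;
    solve [apply ole_joinl | eapply ole_joinr_below; eassumption].
Qed.

Lemma join_cap_join x y : x ⊔ (y ∩ (x ⊔ y)) = x ⊔ y.
Proof.
  apply (ole_antisym HL).
  - apply join_lub; [apply ole_joinl | apply (cap_oler HL)].
  - apply (os_iii _ _ _ HO).
Qed.

Lemma join_monor a x y : x ≤ y -> a ⊔ x ≤ a ⊔ y.
Proof.
  intros Hxy; rewrite <- join_cap_join; apply join_lub; [apply ole_joinl |].
  apply (ole_trans HL _ ((a ⊔ x) ∩ y)); [| apply cap_ole_join, ole_joinl].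
  apply (ole_cap HL); [apply (cap_oler HL) |].
  apply (ole_trans HL _ x); [apply (cap_olel HL) | exact Hxy].
Qed.

End OSemilattice.

Section DistributiveOSemilattice.
Context {S : Type} {cap sqcup : S -> S -> S}.
Hypothesis HO : o_semilattice S cap sqcup.
Hypothesis HD : distributive_os S cap sqcup.
Let HL := o_semilattice_semilattice cap sqcup HO.

Local Infix "∩" := cap (at level 40, left associativity).
Local Infix "⊔" := sqcup (at level 50, left associativity).
Local Notation "x ≤ y" := (ole cap x y) (at level 70).

Lemma join_capr_below w a b c : a ≤ w -> b ≤ w -> c ≤ w ->
  a ⊔ (b ∩ c) = (a ⊔ b) ∩ (a ⊔ c).
Proof.
  intros Ha Hb Hc; pose proof (HD a b c w) as H.
  now rewrite (cap_eql _ _ Ha), (cap_eql _ _ Hb), (cap_eql _ _ Hc) in H.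
Qed.

Lemma join_capl_below w a b c : a ≤ w -> b ≤ w -> c ≤ w ->
  (b ∩ c) ⊔ a = (b ⊔ a) ∩ (c ⊔ a).
Proof.
  intros Ha Hb Hc.
  assert (Hbc : b ∩ c ≤ w) by exact (ole_trans HL _ _ _ (cap_olel HL b c) Hb).
  rewrite (join_comm_below HO w _ _ Hbc Ha), (join_capr_below w a b c Ha Hb Hc).
  now rewrite (join_comm_below HO w a b Ha Hb), (join_comm_below HO w a c Ha Hc).
Qed.

Lemma cap_joinr_below w a b c : a ≤ w -> b ≤ w -> c ≤ w ->
  a ∩ (b ⊔ c) = (a ∩ b) ⊔ (a ∩ c).
Proof.
  intros Ha Hb Hc.
  assert (Hab : a ∩ b ≤ w) by exact (ole_trans HL _ _ _ (cap_olel HL a b) Ha).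
  assert (Hac : a ∩ c ≤ w) by exact (ole_trans HL _ _ _ (cap_olel HL a c) Ha).
  rewrite (join_capr_below w (a ∩ b) a c Hab Ha Hc), (join_absorbr HO _ _ (cap_olel HL a b)).
  rewrite (join_comm_below HO w _ _ Hab Hc), (join_capr_below w c a b Hc Ha Hb).
  rewrite (sl_assoc _ HL), (cap_eql a (c ⊔ a)) by exact (ole_joinr_below HO w c a Hc Ha).
  now rewrite (join_comm_below HO w c b Hc Hb).
Qed.

Lemma modular_law a m t : a ≤ m -> m ≤ a ⊔ t -> m = a ⊔ (m ∩ t).
Proof.
  intros Ham Hmw; set (w := a ⊔ t) in Hmw.
  assert (Htw : t ∩ w ≤ w) by apply (cap_oler HL).
  assert (Haw : a ≤ w) by apply (ole_joinl HO).
  transitivity (m ∩ (a ⊔ (t ∩ w))).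
  - now rewrite (join_cap_join HO).
  - rewrite (cap_joinr_below w m a (t ∩ w) Hmw Haw Htw), (cap_eqr HL _ _ Ham).
    now rewrite (sl_comm _ HL t w), (sl_assoc _ HL), (cap_eql m w Hmw).
Qed.

Lemma join_capr a b c : a ⊔ (b ∩ c) = (a ⊔ b) ∩ (a ⊔ c).
Proof.
  set (m := (a ⊔ b) ∩ (a ⊔ c)).
  assert (Ham : a ≤ m) by (apply (ole_cap HL); apply (ole_joinl HO)).
  assert (Emb : m = a ⊔ (m ∩ b)) by exact (modular_law a m b Ham (cap_olel HL _ _)).
  assert (Emc : m = a ⊔ (m ∩ c)) by exact (modular_law a m c Ham (cap_oler HL _ _)).
  apply (ole_antisym HL).
  - apply (ole_cap HL); apply (join_monor HO); [apply (cap_olel HL) | apply (cap_oler HL)].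
  - assert (Em : m = a ⊔ ((m ∩ b) ∩ (m ∩ c))).
    { rewrite (join_capr_below m) by (exact Ham || apply (cap_olel HL)).
      now rewrite <- Emb, <- Emc, (sl_idem _ HL). }
    rewrite Em at 1; apply (join_monor HO), (cap_ole2 HL); apply (cap_oler HL).
Qed.

End DistributiveOSemilattice.

Section AdoSemilattice.
Context {S : Type} {cap sqcup : S -> S -> S}.
Hypothesis HO : o_semilattice S cap sqcup.
Hypothesis HD : distributive_os S cap sqcup.
Hypothesis join_assoc : forall x y z, sqcup x (sqcup y z) = sqcup (sqcup x y) z.
Let HL := o_semilattice_semilattice cap sqcup HO.

Local Infix "∩" := cap (at level 40, left associativity).
Local Infix "⊔" := sqcup (at level 50, left associativity).
Local Infix "⋎" := (cvee cap sqcup) (at level 50, left associativity).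
Local Notation "x ≤ y" := (ole cap x y) (at level 70).
Local Notation "x ≲ y" := (qle sqcup x y) (at level 70).

Lemma join_joinKl a b : a ⊔ (a ⊔ b) = a ⊔ b.
Proof. now rewrite join_assoc, (join_idem HO). Qed.

Lemma join_joinKr a b : a ⊔ (b ⊔ a) = a ⊔ b.
Proof. now rewrite join_assoc, (join_absorbl HO _ _ (ole_joinl HO a b)). Qed.

Lemma join_self_distrl a b c : a ⊔ (b ⊔ c) = (a ⊔ b) ⊔ (a ⊔ c).
Proof. now rewrite (join_assoc (a ⊔ b)), (join_absorbl HO _ _ (ole_joinl HO a b)), join_assoc. Qed.

Lemma vee_comm a b : a ⋎ b = b ⋎ a.
Proof. apply (sl_comm _ HL). Qed.

Lemma vee_idem a : a ⋎ a = a.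
Proof. unfold cvee; now rewrite (join_idem HO), (sl_idem _ HL). Qed.

Lemma join_veer a b c : a ⊔ (b ⋎ c) = (a ⊔ b) ⋎ (a ⊔ c).
Proof. unfold cvee; now rewrite (join_capr HO HD), <- !join_self_distrl. Qed.

Lemma join_vee_join a b : (a ⋎ b) ⊔ (a ⊔ b) = a ⊔ b.
Proof. apply (join_absorbr HO), (cap_olel HL). Qed.

Lemma join_eq_vee_vee a b : a ⊔ b = a ⋎ (a ⋎ b).
Proof.
  assert (Hv : a ⋎ b ≤ a ⊔ b) by apply (cap_olel HL).
  assert (Ha : a ≤ a ⊔ b) by apply (ole_joinl HO).
  assert (Ejoin : a ⊔ (a ⋎ b) = a ⊔ b).
  { unfold cvee; now rewrite (join_capr HO HD), join_joinKl, join_joinKr, (sl_idem _ HL). }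
  unfold cvee at 1; rewrite (join_comm_below HO _ _ _ Hv Ha), Ejoin.
  now rewrite (sl_idem _ HL).
Qed.

Lemma qle_ole_trans d y z : d ≲ y -> y ≤ z -> d ≲ z.
Proof.
  unfold qle; intros Hdy Hyz.
  rewrite <- (join_absorbl HO z y Hyz) at 1.
  rewrite <- join_assoc, Hdy; exact (join_absorbl HO z y Hyz).
Qed.

(* q' = q ∩ (d ⊔ q) lies below q and satisfies d ⊔ q' = d ⊔ q, so
   ((p ∩ q) ⊔ d) ⊔ q' = ((p ∩ q) ⊔ q') ⊔ d = q ⊔ d = q by distributivity below e. *)
Lemma join_cap_ole_below e p q d : p ≤ e -> q ≤ e -> d ≲ p -> d ≲ q ->
  (p ∩ q) ⊔ d ≤ q.
Proof.
  unfold qle; intros Hp Hq Hpd Hqd.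
  set (q' := q ∩ (d ⊔ q)).
  assert (Hq'q : q' ≤ q) by apply (cap_olel HL).
  assert (Hq'e : q' ≤ e) by exact (ole_trans HL _ _ _ Hq'q Hq).
  assert (Edq' : d ⊔ q' = d ⊔ q) by apply (join_cap_join HO).
  assert (Eq'd : q' ⊔ d = d ⊔ q').
  { apply (join_comm_below HO (d ⊔ q')); [rewrite Edq'; apply (cap_oler HL) | apply (ole_joinl HO)]. }
  assert (Epq' : p ⊔ q' = p ⊔ q).
  { rewrite <- Hpd, <- !join_assoc, Edq'; reflexivity. }
  assert (Epqq' : (p ∩ q) ⊔ q' = q).
  { rewrite (join_capl_below HO HD e q' p q Hq'e Hp Hq), Epq', (join_absorbl HO _ _ Hq'q).
    apply (cap_eqr HL), (ole_joinr_below HO e p q Hp Hq). }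
  apply (ole_trans HL _ _ _ (ole_joinl HO _ q')).
  rewrite <- join_assoc, <- Eq'd, join_assoc, Epqq', Hqd; apply (ole_refl HL).
Qed.

Lemma qle_cap_below e p q d : p ≤ e -> q ≤ e -> d ≲ p -> d ≲ q -> d ≲ p ∩ q.
Proof.
  intros Hp Hq Hpd Hqd; unfold qle; apply (ole_antisym HL).
  - apply (ole_cap HL).
    + rewrite (sl_comm _ HL p q); exact (join_cap_ole_below e q p d Hq Hp Hqd Hpd).
    + exact (join_cap_ole_below e p q d Hp Hq Hpd Hqd).
  - apply (ole_joinl HO).
Qed.

Lemma qle_cap_of_vee a b d : d ≲ a -> d ≲ b -> d ≲ a ⋎ b -> d ≲ a ∩ b.
Proof.
  intros Ha Hb Hv.
  assert (Hva : d ≲ (a ⋎ b) ∩ a)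
    by exact (qle_cap_below _ _ _ d (cap_olel HL _ _) (ole_joinl HO a b) Hv Ha).
  assert (Hvb : d ≲ (a ⋎ b) ∩ b)
    by exact (qle_cap_below _ _ _ d (cap_oler HL _ _) (ole_joinl HO b a) Hv Hb).
  assert (Hvavb : d ≲ ((a ⋎ b) ∩ a) ∩ ((a ⋎ b) ∩ b))
    by exact (qle_cap_below _ _ _ d (cap_olel HL _ _) (cap_olel HL _ _) Hva Hvb).
  apply (qle_ole_trans _ _ _ Hvavb), (cap_ole2 HL); apply (cap_oler HL).
Qed.

Lemma qle_vee_trans a b c d : d ≲ a -> d ≲ b -> d ≲ c ->
  d ≲ a ⋎ b -> d ≲ b ⋎ c -> d ≲ a ⋎ c.
Proof.
  intros Ha Hb Hc Hab Hbc.
  pose proof (qle_cap_of_vee a b d Ha Hb Hab) as Hdab.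
  pose proof (qle_cap_of_vee b c d Hb Hc Hbc) as Hdbc.
  pose proof (qle_cap_below b _ _ d (cap_oler HL a b) (cap_olel HL b c) Hdab Hdbc) as Hd.
  apply (qle_ole_trans _ _ _ Hd), (cap_ole2 HL).
  - exact (ole_trans HL _ _ _ (cap_olel HL a b) (ole_joinl HO a c)).
  - exact (ole_trans HL _ _ _ (cap_oler HL b c) (ole_joinl HO c a)).
Qed.

End AdoSemilattice.

Theorem proposition3p8 (S : Type) (cap sqcup : S -> S -> S)
  (HS : ado_semilattice S cap sqcup) :
  let vee := cvee cap sqcup in
  (forall a b, sqcup a b = vee a (vee a b)) /\
  (forall a b, vee a b = vee b a) /\ (forall a, vee a a = a) /\
  (forall a b, sqcup (vee a b) (sqcup a b) = sqcup a b) /\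
  (forall a b c, sqcup a (vee b c) = vee (sqcup a b) (sqcup a c)) /\
  (forall a b c d,
     qle sqcup d a -> qle sqcup d b -> qle sqcup d c ->
     qle sqcup d (vee a b) -> qle sqcup d (vee b c) ->
     qle sqcup d (vee a c)).
Proof.
  intros vee; destruct HS as [HO HD Hassoc].
  repeat split.
  - exact (join_eq_vee_vee HO HD Hassoc).
  - exact (vee_comm HO).
  - exact (vee_idem HO).
  - exact (join_vee_join HO).
  - exact (join_veer HO HD Hassoc).
  - exact (qle_vee_trans HO HD Hassoc).
Qed.
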